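(* Let $X,Y$ be Banach spaces and $\|\cdot\|$ a norm on $X\oplus Y$, with dual norm (also denoted $\|\cdot\|$) on $X^*\oplus Y^*$. Let $x^*\in X^*$, $y^*\in Y^*$ be such that (i) $1=\|x^*\|=\|x^*+y^*\|$; (ii) the partial Fréchet differential $\partial/\partial x^*$ of the dual norm exists at $x^*$ (i.e., the map $X^*\ni u^*\mapsto\|u^*\|$ is Fréchet differentiable at $x^*$); (iii) the partial Fréchet differential $\partial/\partial y^*$ of the dual norm at $x^*+y^*$ exists and equals $0$ (i.e., the map $Y^*\ni v^*\mapsto\|x^*+v^*\|$ is Fréchet differentiable at $y^*$ with derivative $0$). Then the dual norm is Fréchet differentiable at $x^*+y^*$.
   Context: The dual of $X\oplus Y$ is identified with $X^*\oplus Y^*$ via $(x^*+y^* )(x+y)=x^*(x)+y^*(y)$. *)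

From HB Require Import structures.
From mathcomp Require Import all_boot all_order all_algebra.
From mathcomp Require Import all_classical all_reals all_analysis.
Set Implicit Arguments. Unset Strict Implicit. Unset Printing Implicit Defensive.
Import Order.TTheory GRing.Theory Num.Theory.
Import numFieldNormedType.Exports.
Local Open Scope classical_set_scope.
Local Open Scope ring_scope.

Section Defs.
Variable R : realType.

Definition is_dual (E : normedModType R) (f : E -> R) : Prop :=
  (forall (a : R) (u v : E), f (a *: u + v) = a * f u + f v) /\ continuous f.

(* N is a norm on the product X (+) Y, equivalent to the product topology
   (so that the dual of (X (+) Y, N) is X^* (+) Y^* ). *)
Definition is_sum_norm (X Y : normedModType R) (N : X -> Y -> R) : Prop :=
  [/\ (forall x y, N x y = 0 -> (x = 0) /\ (y = 0)),
      (forall (a : R) x y, N (a *: x) (a *: y) = `|a| * N x y),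
      (forall x y x' y', N (x + x') (y + y') <= N x y + N x' y') &
      (exists c C : R, [/\ 0 < c, 0 < C &
        forall x y, c * Num.max `|x| `|y| <= N x y /\
                    N x y <= C * Num.max `|x| `|y| ])].

Definition dual_norm (X Y : normedModType R) (N : X -> Y -> R)
  (f : X -> R) (g : Y -> R) : R :=
  sup [set r : R | exists x y, N x y <= 1 /\ r = `|f x + g y| ].

Definition fadd (E : Type) (f g : E -> R) : E -> R := fun x => f x + g x.
Definition fscale (E : Type) (a : R) (f : E -> R) : E -> R := fun x => a * f x.
Definition fzero (E : Type) : E -> R := fun _ => 0.

Definition frechet_deriv (V : Type) (S : V -> Prop) (add : V -> V -> V)
  (scale : R -> V -> V) (nv : V -> R) (F : V -> R) (p : V) (L : V -> R)
  : Prop :=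
  [/\ (forall (a : R) h k, S h -> S k -> L (add (scale a h) k) = a * L h + L k),
      (exists K : R, forall h, S h -> `|L h| <= K * nv h) &
      (forall eps : R, 0 < eps -> exists delta : R, 0 < delta /\
         forall h, S h -> nv h < delta ->
           `|F (add p h) - F p - L h| <= eps * nv h)].

Definition frechet_diff (V : Type) (S : V -> Prop) (add : V -> V -> V)
  (scale : R -> V -> V) (nv : V -> R) (F : V -> R) (p : V) : Prop :=
  exists L, frechet_deriv S add scale nv F p L.

End Defs.

From HB Require Import structures.
From mathcomp Require Import all_boot all_order all_algebra.
From mathcomp Require Import all_classical all_reals all_analysis.
From mathcomp Require Import ring lra.
Import Order.TTheory GRing.Theory Num.Theory.
Import numFieldNormedType.Exports.
Local Open Scope classical_set_scope.
Local Open Scope ring_scope.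
Set Implicit Arguments. Unset Strict Implicit. Unset Printing Implicit Defensive.

(* Write phi for the dual norm, D for the derivative in (ii), t = phi(h1, h2)
   and lam = t / eta for a small fixed eta.  By convexity of phi, splitting
     (xs + h1, ys + h2) = lam (xs + h1 / lam, 0) + (1 - lam) (xs, ys + w),
     w = (h2 + lam ys) / (1 - lam),
   gives phi(xs + h1, ys + h2) <= 1 + D h1 + o(t): the first point lies within
   K eta of xs (K bounds the partial norms by phi), where (ii) applies, and
   phi(0, w) = O(t), where (iii) applies.  The reverse inequality follows from
   the upper bound at -h and phi(xs, ys) <= (phi(xs + h) + phi(xs - h)) / 2. *)

Section DualFunctional.
Variables (R : realType) (E : normedModType R).
Implicit Types f g : E -> R.

Lemma dual0 f : is_dual f -> f 0 = 0.
Proof.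
by move=> [lin_f _]; have := lin_f (-1) 0 0; rewrite scaleN1r oppr0 addr0 => ?; lra.
Qed.

Lemma dualZ f a u : is_dual f -> f (a *: u) = a * f u.
Proof. by move=> df; have := df.1 a u 0; rewrite !addr0 dual0 // addr0. Qed.

Lemma dual_bounded f : is_dual f -> exists M, 0 <= M /\ forall x, `|f x| <= M * `|x|.
Proof.
move=> df; have /cvgr_dist_lt/(_ 1 ltr01)/nbhs_norm0P[e /= e0 fe] := df.2 0.
exists (2 / e); split=> [|x]; first by rewrite divr_ge0 // ltW.
have [->|x0] := eqVneq x 0; first by rewrite dual0 // !normr0 mulr0.
have nx : 0 < `|x| by rewrite normr_gt0.
pose s := e / 2 / `|x|.
have s0 : 0 < s by rewrite !divr_gt0.
have : `|s *: x| < e by rewrite normrZ gtr0_norm // divfK ?gt_eqF //; lra.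
move/fe; rewrite dual0 // sub0r normrN dualZ // normrM gtr0_norm // => sfx.
have fx : `|f x| < s^-1 by rewrite -(ltr_pM2l s0) mulfV ?gt_eqF.
suff -> : 2 / e * `|x| = s^-1 by exact: ltW.
by rewrite /s; field; rewrite !gt_eqF.
Qed.

Lemma dual_fzero : is_dual (@fzero R E).
Proof. by split=> [*|]; [rewrite /fzero mulr0 addr0 | exact: cst_continuous]. Qed.

Lemma dual_fadd f g : is_dual f -> is_dual g -> is_dual (fadd f g).
Proof.
move=> [lin_f cf] [lin_g cg]; split=> [a u v|x].
  by rewrite /fadd lin_f lin_g; ring.
by apply: continuousD; [exact: cf|exact: cg].
Qed.

Lemma dual_fscale a f : is_dual f -> is_dual (fscale a f).
Proof.
move=> [lin_f cf]; split=> [b u v|x]; first by rewrite /fscale lin_f; ring.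
by apply: continuousM; [exact: cst_continuous|exact: cf].
Qed.

End DualFunctional.

Section DualNorm.
Variables (R : realType) (X Y : normedModType R) (N : X -> Y -> R).
Hypothesis sumN : is_sum_norm N.
Implicit Types (f : X -> R) (g : Y -> R).

Lemma sum_norm00 : N 0 0 = 0.
Proof.
by case: sumN => _ homN _ _; have := homN 0 0 0; rewrite !scale0r normr0 mul0r.
Qed.

Lemma sum_norm_unit_ball : exists r, 0 < r /\
  forall x y, N x y <= 1 -> `|x| <= r /\ `|y| <= r.
Proof.
case: sumN => _ _ _ [c [C [c0 _ eqvN]]]; exists c^-1; split=> [|x y Nxy].
  by rewrite invr_gt0.
have : Num.max `|x| `|y| <= c^-1.
  by rewrite -(ler_pM2l c0) mulfV ?gt_eqF //; apply: le_trans Nxy; case: (eqvN x y).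
by rewrite ge_max => /andP.
Qed.

Lemma sum_norm_partial_le : exists K, 0 < K /\
  forall x y, N x y <= 1 -> N x 0 <= K /\ N 0 y <= K.
Proof.
case: sumN => _ _ _ [c [C [_ C0 eqvN]]].
have [r [r0 ball_r]] := sum_norm_unit_ball.
exists (C * r); split=> [|x y /ball_r[xr yr]]; first exact: mulr_gt0.
have [_ Nx0] := eqvN x 0; have [_ N0y] := eqvN 0 y.
rewrite normr0 (max_idPl (normr_ge0 x)) in Nx0.
rewrite normr0 (max_idPr (normr_ge0 y)) in N0y.
by split; [apply: le_trans Nx0 _|apply: le_trans N0y _]; rewrite ler_pM2l.
Qed.

Lemma dual_norm_has_ubound f g : is_dual f -> is_dual g ->
  has_ubound [set r : R | exists x y, N x y <= 1 /\ r = `|f x + g y| ].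
Proof.
move=> df dg.
have [Mf [Mf0 bf]] := dual_bounded df; have [Mg [Mg0 bg]] := dual_bounded dg.
have [r [r0 ball_r]] := sum_norm_unit_ball.
exists ((Mf + Mg) * r) => _ [x [y [/ball_r[xr yr] ->]]].
apply: le_trans (ler_normD _ _) _; rewrite mulrDl.
by apply: lerD; [apply: le_trans (bf x) _|apply: le_trans (bg y) _]; exact: ler_wpM2l.
Qed.

Lemma dual_norm_ub f g x y : is_dual f -> is_dual g -> N x y <= 1 ->
  `|f x + g y| <= dual_norm N f g.
Proof.
by move=> df dg Nxy; apply: (ub_le_sup (dual_norm_has_ubound df dg)); exists x, y.
Qed.

Lemma dual_norm_ge0 f g : is_dual f -> is_dual g -> 0 <= dual_norm N f g.
Proof.
move=> df dg; have N00 : N 0 0 <= 1 by rewrite sum_norm00 ler01.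
exact: le_trans (normr_ge0 _) (dual_norm_ub df dg N00).
Qed.

Lemma dual_norm_le f g K :
  (forall x y, N x y <= 1 -> `|f x + g y| <= K) -> dual_norm N f g <= K.
Proof.
move=> bnd; apply: ge_sup => [|_ [x [y [Nxy ->]]]]; last exact: bnd.
by exists `|f 0 + g 0|, 0, 0; rewrite sum_norm00 ler01.
Qed.

Lemma dual_norm_combination f f1 f2 g g1 g2 a b :
  is_dual f1 -> is_dual g1 -> is_dual f2 -> is_dual g2 ->
  (forall x, f x = a * f1 x + b * f2 x) -> (forall y, g y = a * g1 y + b * g2 y) ->
  dual_norm N f g <= `|a| * dual_norm N f1 g1 + `|b| * dual_norm N f2 g2.
Proof.
move=> df1 dg1 df2 dg2 ef eg; apply: dual_norm_le => x y Nxy.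
have -> : f x + g y = a * (f1 x + g1 y) + b * (f2 x + g2 y) by rewrite ef eg; ring.
apply: le_trans (ler_normD _ _) _; rewrite !normrM.
by apply: lerD; apply: ler_wpM2l => //; apply: dual_norm_ub.
Qed.

Lemma dual_normD f1 f2 g1 g2 :
  is_dual f1 -> is_dual g1 -> is_dual f2 -> is_dual g2 ->
  dual_norm N (fadd f1 f2) (fadd g1 g2) <= dual_norm N f1 g1 + dual_norm N f2 g2.
Proof.
move=> df1 dg1 df2 dg2.
have := dual_norm_combination (a := 1) (b := 1) df1 dg1 df2 dg2 _ _.
by rewrite normr1 !mul1r; apply=> ?; rewrite !mul1r.
Qed.

Lemma dual_normZ a f g : is_dual f -> is_dual g ->
  dual_norm N (fscale a f) (fscale a g) <= `|a| * dual_norm N f g.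
Proof.
move=> df dg; have := dual_norm_combination (a := a) (b := 0) df dg df dg _ _.
by rewrite normr0 mul0r addr0; apply=> ?; rewrite mul0r addr0.
Qed.

Lemma dual_norm_partial_le : exists K, 0 < K /\ forall u v, is_dual u -> is_dual v ->
  dual_norm N u (@fzero R Y) <= K * dual_norm N u v /\
  dual_norm N (@fzero R X) v <= K * dual_norm N u v.
Proof.
have [K [K0 partK]] := sum_norm_partial_le.
exists K; split=> // u v du dv.
case: sumN => _ homN _ _.
have Ki0 : 0 < K^-1 by rewrite invr_gt0.
have shrink x y : N x y <= K -> N (K^-1 *: x) (K^-1 *: y) <= 1.
  by rewrite homN gtr0_norm // ler_pdivrMl // mulr1.
split; apply: dual_norm_le => x y /partK[Nx0 N0y]; rewrite /fzero.
- have := dual_norm_ub du dv (shrink _ _ Nx0).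
  rewrite scaler0 dual0 // addr0 dualZ // normrM gtr0_norm // ler_pdivrMl //.
  by rewrite addr0.
- have := dual_norm_ub du dv (shrink _ _ N0y).
  rewrite scaler0 dual0 // add0r dualZ // normrM gtr0_norm // ler_pdivrMl //.
  by rewrite add0r.
Qed.

End DualNorm.

Lemma fscale_fzero (R : realType) (E : Type) (a : R) :
  fscale a (@fzero R E) = @fzero R E.
Proof. by apply/funext => x; rewrite /fscale /fzero mulr0. Qed.

Lemma fadd_fzero (R : realType) (E : Type) (f : E -> R) : fadd f (@fzero R E) = f.
Proof. by apply/funext => x; rewrite /fadd /fzero addr0. Qed.

Section Estimates.
Variables (R : realType) (X Y : normedModType R) (N : X -> Y -> R).
Hypothesis sumN : is_sum_norm N.
Variables (xs : X -> R) (ys : Y -> R) (D : (X -> R) -> R) (KD : R).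

Local Notation nrm := (dual_norm N).
Local Notation zX := (@fzero R X).
Local Notation zY := (@fzero R Y).

Hypotheses (dxs : is_dual xs) (dys : is_dual ys).
Hypotheses (norm_xs : nrm xs zY = 1) (norm_xsys : nrm xs ys = 1).
Hypothesis D_linear : forall a h k, is_dual h -> is_dual k ->
  D (fadd (fscale a h) k) = a * D h + D k.
Hypothesis D_bounded : forall h, is_dual h -> `|D h| <= KD * nrm h zY.

Hypothesis xs_remainder : forall eps : R, 0 < eps -> exists delta, 0 < delta /\
  forall h, is_dual h -> nrm h zY < delta ->
    `|nrm (fadd xs h) zY - nrm xs zY - D h| <= eps * nrm h zY.
Hypothesis ys_remainder : forall eps : R, 0 < eps -> exists delta, 0 < delta /\
  forall h, is_dual h -> nrm zX h < delta ->
    `|nrm xs (fadd ys h) - nrm xs ys - 0| <= eps * nrm zX h.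

Lemma D_scale a h : is_dual h -> D (fscale a h) = a * D h.
Proof.
have D0 : D zX = 0.
  have := D_linear 1 (dual_fzero X) (dual_fzero X).
  by rewrite fscale_fzero fadd_fzero mul1r => ?; lra.
by move=> dh; have := D_linear a dh (dual_fzero X); rewrite fadd_fzero D0 addr0.
Qed.

Lemma D_dominated : exists C, forall h1 h2, is_dual h1 -> is_dual h2 ->
  `|D h1| <= C * nrm h1 h2.
Proof.
have [K [K0 partK]] := dual_norm_partial_le sumN.
exists (`|KD| * K) => h1 h2 dh1 dh2; apply: le_trans (D_bounded dh1) _.
have nh1 := dual_norm_ge0 sumN dh1 (dual_fzero Y).
apply: le_trans (ler_wpM2r nh1 (ler_norm KD)) _.
by rewrite -mulrA ler_wpM2l // (partK _ _ dh1 dh2).1.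
Qed.

Lemma x_remainder_rescaled (eps : R) : 0 < eps -> exists delta, 0 < delta /\
  forall (lam : R) h, 0 < lam -> is_dual h -> nrm h zY < lam * delta ->
    lam * nrm (fadd xs (fscale (lam^-1) h)) zY <= lam + D h + eps * nrm h zY.
Proof.
move=> eps0; have [delta [delta0 rem]] := xs_remainder eps0.
exists delta; split=> // lam h lam0 dh small.
have dhl : is_dual (fscale (lam^-1) h) by exact: dual_fscale.
have nhl : nrm (fscale (lam^-1) h) zY <= lam^-1 * nrm h zY.
  have := dual_normZ sumN lam^-1 dh (dual_fzero Y).
  by rewrite fscale_fzero gtr0_norm ?invr_gt0.
have small' : nrm (fscale (lam^-1) h) zY < delta.
  by apply: le_lt_trans nhl _; rewrite ltr_pdivrMl.
have := rem _ dhl small'; rewrite norm_xs D_scale // ler_norml => /andP[_ upper].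
have epsb := ler_wpM2l (ltW eps0) nhl.
rewrite -ler_pdivlMl // (_ : lam^-1 * _ = 1 + lam^-1 * D h + eps * (lam^-1 * nrm h zY)).
  lra.
by field; rewrite gt_eqF.
Qed.

Lemma y_remainder_rescaled (eps : R) : 0 < eps -> exists delta, 0 < delta /\
  forall (lam : R) h, 0 < lam < 1 -> is_dual h ->
    nrm zX h + lam * nrm zX ys < (1 - lam) * delta ->
    (1 - lam) * nrm xs (fadd ys (fscale ((1 - lam)^-1) (fadd h (fscale lam ys))))
      <= (1 - lam) + eps * (nrm zX h + lam * nrm zX ys).
Proof.
move=> eps0; have [delta [delta0 rem]] := ys_remainder eps0.
exists delta; split=> // lam h /andP[lam0 lam1] dh small.
have mu0 : 0 < 1 - lam by rewrite subr_gt0.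
set w := fscale _ _; set s := nrm zX h + lam * nrm zX ys in small *.
have dw : is_dual w by apply/dual_fscale/dual_fadd/dual_fscale.
have nw : nrm zX w <= (1 - lam)^-1 * s.
  have := dual_norm_combination sumN (a := (1 - lam)^-1) (b := (1 - lam)^-1 * lam)
    (dual_fzero X) dh (dual_fzero X) dys _ _.
  rewrite gtr0_norm ?invr_gt0 // gtr0_norm ?mulr_gt0 ?invr_gt0 // /s mulrDr mulrA.
  apply=> [x|y]; rewrite /w /fzero /fscale /fadd; ring.
have small' : nrm zX w < delta by apply: le_lt_trans nw _; rewrite ltr_pdivrMl.
have := rem _ dw small'; rewrite norm_xsys subr0 ler_norml => /andP[_ upper].
have epsb := ler_wpM2l (ltW eps0) nw.
rewrite -ler_pdivlMl // (_ : (1 - lam)^-1 * _ = 1 + eps * ((1 - lam)^-1 * s)).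
  lra.
by field; rewrite gt_eqF.
Qed.

Lemma dual_norm_split (lam : R) h1 h2 : 0 < lam < 1 -> is_dual h1 -> is_dual h2 ->
  nrm (fadd xs h1) (fadd ys h2) <=
    lam * nrm (fadd xs (fscale (lam^-1) h1)) zY +
    (1 - lam) * nrm xs (fadd ys (fscale ((1 - lam)^-1) (fadd h2 (fscale lam ys)))).
Proof.
move=> /andP[lam0 lam1] dh1 dh2; have mu0 : 0 < 1 - lam by rewrite subr_gt0.
have := dual_norm_combination sumN (a := lam) (b := 1 - lam)
  (dual_fadd dxs (dual_fscale _ dh1)) (dual_fzero Y) dxs
  (dual_fadd dys (dual_fscale _ (dual_fadd dh2 (dual_fscale lam dys)))) _ _.
rewrite !gtr0_norm //; apply=> [x|y]; rewrite /fadd /fscale /fzero.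
  by field; rewrite gt_eqF.
by field; rewrite gt_eqF.
Qed.

Lemma x_part (eps : R) : 0 < eps -> exists eta, 0 < eta /\
  forall (lam : R) h1 h2, 0 < lam -> is_dual h1 -> is_dual h2 ->
    nrm h1 h2 = lam * eta ->
    lam * nrm (fadd xs (fscale (lam^-1) h1)) zY <= lam + D h1 + eps * nrm h1 h2.
Proof.
move=> eps0; have [K [K0 partK]] := dual_norm_partial_le sumN.
have [d [d0 xrem]] := x_remainder_rescaled (divr_gt0 eps0 K0).
exists (d / (2 * K)); split=> [|lam h1 h2 lam0 dh1 dh2 t_eq].
  by rewrite divr_gt0 // mulr_gt0.
have [a_le _] := partK h1 h2 dh1 dh2.
have Kt : K * nrm h1 h2 = lam * d / 2 by rewrite t_eq; field; rewrite gt_eqF.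
have x_small : nrm h1 zY < lam * d.
  by apply: le_lt_trans a_le _; rewrite Kt; have := mulr_gt0 lam0 d0; lra.
apply: le_trans (xrem _ _ lam0 dh1 x_small) _; rewrite lerD2l.
by rewrite -mulrA ler_pM2l // ler_pdivrMl.
Qed.

Lemma y_part (eps eta : R) : 0 < eps -> 0 < eta -> exists delta, 0 < delta /\
  forall (lam : R) h1 h2, 0 < lam <= 1 / 2 -> is_dual h1 -> is_dual h2 ->
    nrm h1 h2 = lam * eta -> nrm h1 h2 < delta ->
    (1 - lam) * nrm xs (fadd ys (fscale ((1 - lam)^-1) (fadd h2 (fscale lam ys))))
      <= (1 - lam) + eps * nrm h1 h2.
Proof.
move=> eps0 eta0; have [K [K0 partK]] := dual_norm_partial_le sumN.
have Y00 : 0 <= nrm zX ys by apply: dual_norm_ge0 => //; exact: dual_fzero.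
pose M := K + nrm zX ys / eta.
have M0 : 0 < M by rewrite /M ltr_wpDr // divr_ge0 // ltW.
have [d [d0 yrem]] := y_remainder_rescaled (divr_gt0 eps0 M0).
exists (d / (2 * M)); split=> [|lam h1 h2 /andP[lam0 lam_half] dh1 dh2 t_eq t_small].
  by rewrite divr_gt0 // mulr_gt0.
have [_ b_le] := partK h1 h2 dh1 dh2.
have yt_le : nrm zX h2 + lam * nrm zX ys <= nrm h1 h2 * M.
  rewrite (_ : _ * M = K * nrm h1 h2 + lam * nrm zX ys) ?lerD2r // /M t_eq.
  by field; rewrite gt_eqF.
have y_small : nrm zX h2 + lam * nrm zX ys < (1 - lam) * d.
  apply: le_lt_trans yt_le _.
  have : nrm h1 h2 * M < d / 2.
    by rewrite -ltr_pdivlMr // (_ : d / 2 / M = d / (2 * M)) //; field; rewrite gt_eqF.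
  nra.
apply: le_trans (yrem _ _ _ dh2 y_small) _; first by rewrite lam0 /=; lra.
by rewrite lerD2l -mulrA ler_pM2l // ler_pdivrMl // [M * _]mulrC.
Qed.

Lemma dual_norm_upper_estimate (eps : R) : 0 < eps -> exists delta, 0 < delta /\
  forall h1 h2, is_dual h1 -> is_dual h2 -> nrm h1 h2 < delta ->
    nrm (fadd xs h1) (fadd ys h2) <= 1 + D h1 + eps * nrm h1 h2.
Proof.
move=> eps0; have eps20 : 0 < eps / 2 by rewrite divr_gt0.
have [eta [eta0 xpart]] := x_part eps20.
have [delta [delta0 ypart]] := y_part eps20 eta0.
exists (Num.min (eta / 2) delta); split=> [|h1 h2 dh1 dh2].
  by rewrite lt_min divr_gt0.
rewrite lt_min => /andP[t_eta t_delta].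
have t0 := dual_norm_ge0 sumN dh1 dh2.
have [t_eq0|t_neq0] := eqVneq (nrm h1 h2) 0.
  have [C domD] := D_dominated; have := domD h1 h2 dh1 dh2.
  have := dual_normD sumN dxs dys dh1 dh2.
  by rewrite norm_xsys t_eq0 mulr0 ler_norml oppr0 => ? /andP[? ?]; lra.
have t_gt0 : 0 < nrm h1 h2 by rewrite lt_neqAle eq_sym t_neq0.
pose lam := nrm h1 h2 / eta.
have lam0 : 0 < lam by rewrite divr_gt0.
have lam_half : lam <= 1 / 2 by rewrite ler_pdivrMr // mulrC; lra.
have t_eq : nrm h1 h2 = lam * eta by rewrite divfK ?gt_eqF.
have := xpart lam h1 h2 lam0 dh1 dh2 t_eq.
have := ypart lam h1 h2 _ dh1 dh2 t_eq t_delta; rewrite lam0 lam_half => /(_ isT).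
have := dual_norm_split (lam := lam) _ dh1 dh2; rewrite lam0 /=.
by rewrite (_ : lam < 1) /=; lra.
Qed.

Lemma dual_norm_remainder (eps : R) : 0 < eps -> exists delta, 0 < delta /\
  forall h1 h2, is_dual h1 -> is_dual h2 -> nrm h1 h2 < delta ->
    `|nrm (fadd xs h1) (fadd ys h2) - nrm xs ys - D h1| <= eps * nrm h1 h2.
Proof.
move=> eps0; have [delta [delta0 upper]] := dual_norm_upper_estimate eps0.
exists delta; split=> // h1 h2 dh1 dh2 small.
have := upper _ _ dh1 dh2 small; rewrite norm_xsys ler_norml => up.
apply/andP; split; last by lra.
have dm1 := dual_fscale (-1) dh1; have dm2 := dual_fscale (-1) dh2.
have nm : nrm (fscale (-1) h1) (fscale (-1) h2) <= nrm h1 h2.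
  by have := dual_normZ sumN (-1) dh1 dh2; rewrite normrN normr1 mul1r.
have := upper _ _ dm1 dm2 (le_lt_trans nm small); rewrite D_scale // mulN1r => up_opp.
have midpoint : 1 <= 1 / 2 * nrm (fadd xs h1) (fadd ys h2) +
    1 / 2 * nrm (fadd xs (fscale (-1) h1)) (fadd ys (fscale (-1) h2)).
  have := dual_norm_combination sumN (a := 1 / 2) (b := 1 / 2) (f := xs) (g := ys)
    (dual_fadd dxs dh1) (dual_fadd dys dh2) (dual_fadd dxs dm1) (dual_fadd dys dm2) _ _.
  rewrite norm_xsys ger0_norm ?divr_ge0 //.
  by apply=> [x|y]; rewrite /fadd /fscale; field.
have := ler_wpM2l (ltW eps0) nm; lra.
Qed.

End Estimates.

Theorem lemma3p2 (R : realType) (X Y : completeNormedModType R)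
  (N : X -> Y -> R) (xs : X -> R) (ys : Y -> R) :
  is_sum_norm N ->
  is_dual xs -> is_dual ys ->
  (* (i) *)
  dual_norm N xs (@fzero R Y) = 1 ->
  dual_norm N xs ys = 1 ->
  (* (ii) *)
  frechet_diff (@is_dual R X) (@fadd R X) (@fscale R X)
    (fun u => dual_norm N u (@fzero R Y))
    (fun u => dual_norm N u (@fzero R Y)) xs ->
  (* (iii) *)
  frechet_deriv (@is_dual R Y) (@fadd R Y) (@fscale R Y)
    (fun v => dual_norm N (@fzero R X) v)
    (fun v => dual_norm N xs v) ys (fun _ => 0) ->
  frechet_diff
    (fun p : (X -> R) * (Y -> R) => is_dual p.1 /\ is_dual p.2)
    (fun p q => (fadd p.1 q.1, fadd p.2 q.2))
    (fun a p => (fscale a p.1, fscale a p.2))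
    (fun p => dual_norm N p.1 p.2)
    (fun p => dual_norm N p.1 p.2) (xs, ys).
Proof.
move=> sumN dxs dys norm_xs norm_xsys [D [D_linear [KD D_bounded] xs_rem]] [_ _ ys_rem].
exists (fun p => D p.1); split.
- by move=> a [h1 h2] [k1 k2] [dh1 _] [dk1 _]; exact: D_linear.
- have [C D_dom] := D_dominated sumN D_bounded.
  by exists C => -[h1 h2] [dh1 dh2]; exact: D_dom.
- move=> eps eps0.
  have [delta [delta0 rem]] := dual_norm_remainder sumN dxs dys norm_xs norm_xsys
    D_linear D_bounded xs_rem ys_rem eps0.
  by exists delta; split=> // -[h1 h2] [dh1 dh2]; exact: rem.
Qed.
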